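(* Let $0<\delta\le1$, $1\le\alpha_n\le\log n$, let $\sigma(x)=1/(1+e^{-x})$ be the logistic squasher, let $m:\mathbb{R}^d\to\mathbb{R}$ be Lipschitz continuous with Lipschitz constant $C_{Lip}$, let $L,r,n\in\mathbb{N}$ with $L\ge2$, $r\ge2d$, $n\ge8d$, $n\ge\exp(r+1)$, and let $K,K_n\in\mathbb{N}$ with $K^d\le K_n$. Let $a_1,\dots,a_d,b_1,\dots,b_d\in[-\alpha_n,\alpha_n]$ with $b_i-a_i=\Delta$ for all $i\in\{1,\dots,d\}$, where $\Delta>0$. Then there exist $\alpha_1,\dots,\alpha_{K^d}\in[-\|m\|_\infty,\|m\|_\infty]$ and $u_1,v_1,\dots,u_{K^d},v_{K^d}\in[a_1,b_1)\times\dots\times[a_d,b_d)$ such that the following holds. For all pairwise distinct $j_1,\dots,j_{K^d}\in\{1,\dots,K_n\}$, every weight vector $\mathbf{w}$ satisfying, for all $k\in\{1,\dots,K^d\}$, $w^{(0)}_{j_k,j,j}=\frac{4d(\log n)^2}{\delta}$, $w^{(0)}_{j_k,j,0}=-\frac{4d(\log n)^2u_k^{(j)}}{\delta}$, $w^{(0)}_{j_k,j+d,j}=-\frac{4d(\log n)^2}{\delta}$, $w^{(0)}_{j_k,j+d,0}=\frac{4d(\log n)^2v_k^{(j)}}{\delta}$ for $j\in\{1,\dots,d\}$; $w^{(0)}_{j_k,s,t}=0$ if $s\le2d$, $s\ne t$, $s\ne t+d$, $t>0$; $w^{(1)}_{j_k,1,t}=8(\log n)^2$ for $t\in\{1,\dots,2d\}$,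 $w^{(1)}_{j_k,1,0}=-8(\log n)^2(2d-\frac12)$, $w^{(1)}_{j_k,1,t}=0$ for $t>2d$; $w^{(l)}_{j_k,1,1}=6(\log n)^2$, $w^{(l)}_{j_k,1,0}=-3(\log n)^2$ and $w^{(l)}_{j_k,1,t}=0$ for $t>1$, for $l\in\{2,\dots,L\}$; and every weight vector $\bar{\mathbf{w}}$ satisfying $\bar w^{(L)}_{1,1,j_k}=\alpha_k$ ($k\in\{1,\dots,K^d\}$), $\bar w^{(L)}_{1,1,k}=0$ ($k\notin\{j_1,\dots,j_{K^d}\}$) and $|w^{(l)}_{j_s,k,i}-\bar w^{(l)}_{j_s,k,i}|\le\log n$ for all $k,i$, $l\in\{0,\dots,L-1\}$, $s\in\{1,\dots,K^d\}$, we have \[ |f_{\bar{\mathbf{w}}}(x)-m(x)|\le c_{19}\Big(C_{Lip}\cdot\frac{\Delta}{K}+K^d\cdot\frac1n\Big) \] for all $x\in[a_1,b_1]\times\dots\times[a_d,b_d]$ which are not contained in \[ \bigcup_{j\in\{0,1,\dots,K\}}\bigcup_{i\in\{1,\dots,d\}}\Big\{x\in\mathbb{R}^d:\Big|x^{(i)}-\Big(a_i+j\cdot\frac{b_i-a_i}{K}\Big)\Big|<\delta\Big\}, \] where $c_{19}>0$ is a constant depending only on $d$ and $\|m\|_\infty$; and, if additionally $\delta\le\Delta/K$, then $|f_{\bar{\mathbf{w}}}(x)|\le\|m\|_\infty\cdot(3^d+K^d/n)$ for all $x\in\mathbb{R}^d$.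
   Context: For a weight vector $\bar{\mathbf{w}}=(\bar w^{(l)}_{k,i,j})$, $f_{\bar{\mathbf{w}}}(x)=\sum_{j=1}^{K_n}\bar w^{(L)}_{1,1,j}\bar f^{(L)}_{j,1}(x)$, where for $k\in\{1,\dots,K_n\}$, $i\in\{1,\dots,r\}$: $\bar f^{(l)}_{k,i}(x)=\sigma\big(\sum_{j=1}^r\bar w^{(l-1)}_{k,i,j}\bar f^{(l-1)}_{k,j}(x)+\bar w^{(l-1)}_{k,i,0}\big)$ for $l=2,\dots,L$ and $\bar f^{(1)}_{k,i}(x)=\sigma\big(\sum_{j=1}^d\bar w^{(0)}_{k,i,j}x^{(j)}+\bar w^{(0)}_{k,i,0}\big)$. $x^{(j)}$ and $u_k^{(j)}$ denote $j$-th components; $\|m\|_\infty=\sup_x|m(x)|$. *)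

(* concrete reals R. Points of R^d are represented as
   functions nat -> R, of which only the coordinates 1..d are ever read. *)
From Stdlib Require Import Reals.
Open Scope R_scope.

Fixpoint sum1 (n : nat) (f : nat -> R) : R :=
  match n with
  | O => 0
  | S p => sum1 p f + f (S p)
  end.

Definition sigma (x : R) : R := 1 / (1 + exp (- x)).

Definition dist_d (d : nat) (x y : nat -> R) : R :=
  sqrt (sum1 d (fun i => (x i - y i) ^ 2)).

(* Weight vectors: w l k i j  stands for  w^{(l)}_{k,i,j}. *)
Definition weights := nat -> nat -> nat -> nat -> R.

(* hid w d r l k i x  =  \bar f^{(l+1)}_{k,i}(x) *)
Fixpoint hid (w : weights) (d r : nat) (l : nat) (k i : nat) (x : nat -> R) : R :=
  match l with
  | O => sigma (sum1 d (fun j => w 0%nat k i j * x j) + w 0%nat k i 0%nat)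
  | S p => sigma (sum1 r (fun j => w (S p) k i j * hid w d r p k j x)
                  + w (S p) k i 0%nat)
  end.

Definition fnet (w : weights) (d r L Kn : nat) (x : nat -> R) : R :=
  sum1 Kn (fun j => w L 1%nat 1%nat j * hid w d r (L - 1) j 1%nat x).

Definition sup_norm_is (m : (nat -> R) -> R) (M : R) : Prop :=
  is_lub (fun y => exists x, y = Rabs (m x)) M.

Definition lipschitz_d (d : nat) (m : (nat -> R) -> R) (C : R) : Prop :=
  forall x y, Rabs (m x - m y) <= C * dist_d d x y.

(* Cut the cube [a, b] into K^d cells of side q = Delta / K and reserve for cell k
   the subnetwork j_k.  Its first-layer neurons j and j + d are sigmoids of slope
   4 d (log n)^2 / delta testing x_j > u_j and x_j < v_j, its second layer takes the
   conjunction of these 2d tests and the deeper layers repeat the result; every decision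
   is taken with a margin of at least (log n)^2, so perturbing the weights by log n
   changes none of them.  Hence, with tau = exp (-(log n)^2) <= 1/n, subnetwork k outputs
   at least 1 - tau on the points of cell k at distance >= delta from its faces and at
   most tau outside the open cell.  With output weight m (corner of cell k), a point
   delta-far from the grid activates exactly its own cell, which costs
   C_Lip sqrt(d) Delta / K by Lipschitz continuity plus (K^d + 1) ||m|| tau; and since the
   open cells are disjoint, at most one subnetwork is active anywhere, which gives the
   global bound. *)

From Pilot Require Import Defs.
From Stdlib Require Import Reals Lra Lia Classical.
Open Scope R_scope.
(* [Reals] exports its own [sigma]; the logistic squasher of [Defs] must win. *)
Import Defs.

Lemma Rabs_le_between x e : Rabs x <= e -> - e <= x <= e.
Proof. intros H; pose proof (Rle_abs x); pose proof (Rle_abs (- x)); rewrite Rabs_Ropp in *; lra. Qed.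

Lemma sum1_ext n f g :
  (forall t, (1 <= t <= n)%nat -> f t = g t) -> sum1 n f = sum1 n g.
Proof.
  induction n as [|n IH]; intros H; simpl; [reflexivity|].
  rewrite IH, H; [reflexivity|lia|intros; apply H; lia].
Qed.

Lemma sum1_le n f g :
  (forall t, (1 <= t <= n)%nat -> f t <= g t) -> sum1 n f <= sum1 n g.
Proof.
  induction n as [|n IH]; intros H; simpl; [lra|].
  assert (sum1 n f <= sum1 n g) by (apply IH; intros; apply H; lia).
  assert (f (S n) <= g (S n)) by (apply H; lia).
  lra.
Qed.

Lemma sum1_const n c : sum1 n (fun _ => c) = INR n * c.
Proof. induction n as [|n IH]; simpl sum1; [simpl; ring|]. rewrite IH, S_INR; ring. Qed.

Lemma sum1_le_const n f c :
  (forall t, (1 <= t <= n)%nat -> f t <= c) -> sum1 n f <= INR n * c.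
Proof. intros H; rewrite <- sum1_const; apply sum1_le; exact H. Qed.

Lemma sum1_nonneg n f : (forall t, (1 <= t <= n)%nat -> 0 <= f t) -> 0 <= sum1 n f.
Proof. intros H; rewrite <- (Rmult_0_r (INR n)), <- sum1_const; apply sum1_le; exact H. Qed.

Lemma sum1_scal_l n c f : sum1 n (fun t => c * f t) = c * sum1 n f.
Proof. induction n as [|n IH]; simpl; [ring|]. rewrite IH; ring. Qed.

Lemma sum1_sub n f g : sum1 n f - sum1 n g = sum1 n (fun t => f t - g t).
Proof. induction n as [|n IH]; simpl; [ring|]. rewrite <- IH; ring. Qed.

Lemma Rabs_sum1_le n f g :
  (forall t, (1 <= t <= n)%nat -> Rabs (f t) <= g t) -> Rabs (sum1 n f) <= sum1 n g.
Proof.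
  induction n as [|n IH]; intros H; simpl; [rewrite Rabs_R0; lra|].
  assert (Rabs (sum1 n f) <= sum1 n g) by (apply IH; intros; apply H; lia).
  assert (Rabs (f (S n)) <= g (S n)) by (apply H; lia).
  pose proof (Rabs_triang (sum1 n f) (f (S n))); lra.
Qed.

Lemma sum1_eq_0 n f : (forall t, (1 <= t <= n)%nat -> f t = 0) -> sum1 n f = 0.
Proof. intros H; rewrite (sum1_ext n f (fun _ => 0)), sum1_const by exact H; ring. Qed.

Lemma sum1_trunc n m f :
  (m <= n)%nat -> (forall t, (m < t <= n)%nat -> f t = 0) -> sum1 n f = sum1 m f.
Proof.
  induction n as [|n IH]; intros Hm H.
  - assert (m = 0%nat) by lia; subst; reflexivity.
  - destruct (Nat.eq_dec m (S n)) as [->|Hne]; [reflexivity|].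
    simpl; rewrite IH, (H (S n)); [ring|lia|lia|intros; apply H; lia].
Qed.

Lemma sum1_extract n f s : (1 <= s <= n)%nat ->
  sum1 n f = f s + sum1 n (fun t => if Nat.eq_dec t s then 0 else f t).
Proof.
  induction n as [|n IH]; intros Hs; [lia|]. cbn [sum1].
  destruct (Nat.eq_dec (S n) s) as [<-|Hne].
  - rewrite (sum1_ext n (fun t => if Nat.eq_dec t (S n) then 0 else f t) f); [ring|].
    intros t Ht; destruct (Nat.eq_dec t (S n)); [lia|reflexivity].
  - rewrite (IH ltac:(lia)); ring.
Qed.

Lemma sum1_single n f s : (1 <= s <= n)%nat ->
  (forall t, (1 <= t <= n)%nat -> t <> s -> f t = 0) -> sum1 n f = f s.
Proof.
  intros Hs H; rewrite (sum1_extract n f s Hs), sum1_eq_0; [ring|].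
  intros t Ht; destruct (Nat.eq_dec t s); auto.
Qed.

Lemma sum1_le_extract n f s : (1 <= s <= n)%nat ->
  (forall t, (1 <= t <= n)%nat -> f t <= 1) -> sum1 n f <= INR n - 1 + f s.
Proof.
  intros Hs H.
  pose proof (sum1_extract n (fun _ => 1) s Hs) as E1; rewrite sum1_const in E1.
  rewrite (sum1_extract n f s Hs).
  enough (sum1 n (fun t => if Nat.eq_dec t s then 0 else f t)
          <= sum1 n (fun t => if Nat.eq_dec t s then 0 else 1)) by lra.
  apply sum1_le; intros t Ht; destruct (Nat.eq_dec t s); [lra|auto].
Qed.

Lemma sum1_reindex N n (jj : nat -> nat) (c : nat -> R) :
  (forall k, (1 <= k <= N)%nat -> (1 <= jj k <= n)%nat) ->
  (forall k k', (1 <= k <= N)%nat -> (1 <= k' <= N)%nat -> jj k = jj k' -> k = k') ->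
  (forall j, (1 <= j <= n)%nat -> (forall k, (1 <= k <= N)%nat -> j <> jj k) -> c j = 0) ->
  sum1 n c = sum1 N (fun k => c (jj k)).
Proof.
  revert c; induction N as [|N IH]; intros c Hrange Hinj Hzero.
  - apply sum1_eq_0; intros j Hj; apply Hzero; [exact Hj|lia].
  - set (c' := fun j => if Nat.eq_dec j (jj (S N)) then 0 else c j).
    rewrite (sum1_extract n c (jj (S N))) by (apply Hrange; lia).
    fold c'; rewrite IH; cbn [sum1]; [rewrite Rplus_comm; f_equal|..].
    + apply sum1_ext; intros k Hk; unfold c'.
      destruct (Nat.eq_dec (jj k) (jj (S N))) as [E|]; [|reflexivity].
      apply Hinj in E; lia.
    + intros; apply Hrange; lia.
    + intros; apply Hinj; lia.
    + intros j Hj Hj'; unfold c'; destruct (Nat.eq_dec j (jj (S N))) as [|Hne]; [reflexivity|].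
      apply Hzero; [exact Hj|]; intros k Hk.
      destruct (Nat.eq_dec k (S N)) as [->|]; [exact Hne|apply Hj'; lia].
Qed.

Lemma sigma_bounds z : 0 < sigma z < 1.
Proof.
  unfold sigma; pose proof (exp_pos (- z)); split.
  - apply Rdiv_lt_0_compat; lra.
  - apply (Rmult_lt_reg_r (1 + exp (- z))); [lra|]. field_simplify; lra.
Qed.

Lemma sigma_ge_1_sub_exp z : 1 - exp (- z) <= sigma z.
Proof.
  unfold sigma; pose proof (exp_pos (- z)).
  apply (Rmult_le_reg_r (1 + exp (- z))); [lra|]. field_simplify; nra.
Qed.

Lemma sigma_le_exp z : sigma z <= exp z.
Proof.
  unfold sigma; rewrite exp_Ropp; pose proof (exp_pos z) as Hz.
  apply (Rmult_le_reg_r (1 + / exp z)); [pose proof (Rinv_0_lt_compat _ Hz); lra|].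
  field_simplify; lra.
Qed.

Lemma exp_le_exp_of_le x y : x <= y -> exp x <= exp y.
Proof. intros [H|<-]; [left; apply exp_increasing, H|lra]. Qed.

(* exp z >= (1 + z/2)^2 >= (1 + D)^2 >= 4 D. *)
Lemma exp_ge_4_mul D z : 0 < D -> 2 * D <= z -> 4 * D <= exp z.
Proof.
  intros HD Hz.
  replace z with (z / 2 + z / 2) by field; rewrite exp_plus.
  assert (H1 : 1 + D <= exp (z / 2)) by (pose proof (exp_ineq1_le (z / 2)); lra).
  pose proof (Rmult_le_compat (1 + D) _ (1 + D) _ ltac:(lra) ltac:(lra) H1 H1).
  pose proof (pow2_ge_0 (1 - D)); nra.
Qed.

Lemma sigma_ge_1_sub_inv4 D z : 0 < D -> 2 * D <= z -> 1 - / (4 * D) <= sigma z.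
Proof.
  intros HD Hz; pose proof (sigma_ge_1_sub_exp z).
  enough (exp (- z) <= / (4 * D)) by lra.
  rewrite exp_Ropp; apply Rinv_le_contravar; [lra|apply exp_ge_4_mul; lra].
Qed.

Lemma sigma_le_inv8 z : z <= -4 -> sigma z <= / 8.
Proof.
  intros Hz; pose proof (sigma_le_exp z).
  enough (exp z <= / 8) by lra.
  replace z with (- - z) by ring; rewrite exp_Ropp.
  apply Rinv_le_contravar; [lra|]. replace 8 with (4 * 2) by ring. apply exp_ge_4_mul; lra.
Qed.

Lemma sigma_ge_tail lam z : lam ^ 2 <= z -> 1 - exp (- lam ^ 2) <= sigma z.
Proof.
  intros Hz; pose proof (sigma_ge_1_sub_exp z).
  pose proof (exp_le_exp_of_le (- z) (- lam ^ 2) ltac:(lra)); lra.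
Qed.

Lemma sigma_le_tail lam z : z <= - lam ^ 2 -> sigma z <= exp (- lam ^ 2).
Proof.
  intros Hz; pose proof (sigma_le_exp z).
  pose proof (exp_le_exp_of_le z (- lam ^ 2) Hz); lra.
Qed.

Lemma exp_neg_sqr_le_inv8 lam : 3 <= lam -> exp (- lam ^ 2) <= / 8.
Proof.
  intros H; rewrite exp_Ropp; apply Rinv_le_contravar; [lra|].
  replace 8 with (4 * 2) by ring; apply exp_ge_4_mul; nra.
Qed.

Definition affine (n : nat) (c y : nat -> R) : R := sum1 n (fun t => c t * y t) + c 0%nat.

Lemma hid_0 w d r k i x : hid w d r 0 k i x = sigma (affine d (w 0%nat k i) x).
Proof. reflexivity. Qed.

Lemma hid_S w d r p k i x :
  hid w d r (S p) k i x = sigma (affine r (w (S p) k i) (fun j => hid w d r p k j x)).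
Proof. reflexivity. Qed.

Lemma hid_bounds w d r l k i x : 0 < hid w d r l k i x < 1.
Proof. destruct l; apply sigma_bounds. Qed.

Lemma affine_single n c y s : (1 <= s <= n)%nat ->
  (forall t, (1 <= t <= n)%nat -> t <> s -> c t = 0) -> affine n c y = c s * y s + c 0%nat.
Proof.
  intros Hs H; unfold affine; rewrite (sum1_single n _ s Hs); [reflexivity|].
  intros t Ht Hne; rewrite H by assumption; ring.
Qed.

Lemma affine_perturb n lam c cb y :
  (forall t, (t <= n)%nat -> Rabs (c t - cb t) <= lam) ->
  Rabs (affine n cb y - affine n c y) <= lam * (1 + sum1 n (fun t => Rabs (y t))).
Proof.
  intros H; unfold affine.
  assert (E : sum1 n (fun t => cb t * y t) - sum1 n (fun t => c t * y t)
             = sum1 n (fun t => (cb t - c t) * y t))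
    by (rewrite sum1_sub; apply sum1_ext; intros; ring).
  assert (Hs : Rabs (sum1 n (fun t => (cb t - c t) * y t)) <= lam * sum1 n (fun t => Rabs (y t))).
  { rewrite <- sum1_scal_l; apply Rabs_sum1_le; intros t Ht.
    rewrite Rabs_mult, <- Rabs_Ropp, Ropp_minus_distr.
    apply Rmult_le_compat_r; [apply Rabs_pos|apply H; lia]. }
  pose proof (H 0%nat (Nat.le_0_l n)) as H0; rewrite <- Rabs_Ropp, Ropp_minus_distr in H0.
  replace (sum1 n (fun t => cb t * y t) + cb 0%nat - (sum1 n (fun t => c t * y t) + c 0%nat))
    with (sum1 n (fun t => (cb t - c t) * y t) + (cb 0%nat - c 0%nat)) by lra.
  pose proof (Rabs_triang (sum1 n (fun t => (cb t - c t) * y t)) (cb 0%nat - c 0%nat)); lra.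
Qed.

Lemma affine_perturb_unit n lam c cb y : INR n + 1 <= lam ->
  (forall t, (t <= n)%nat -> Rabs (c t - cb t) <= lam) ->
  (forall t, (1 <= t <= n)%nat -> 0 <= y t <= 1) ->
  Rabs (affine n cb y - affine n c y) <= lam ^ 2.
Proof.
  intros Hn H Hy; eapply Rle_trans; [apply affine_perturb, H|].
  assert (sum1 n (fun t => Rabs (y t)) <= INR n * 1).
  { apply sum1_le_const; intros t Ht; specialize (Hy t Ht); rewrite Rabs_pos_eq; lra. }
  pose proof (pos_INR n); nra.
Qed.

Lemma and_gate m r lam c cb y : INR r + 1 <= lam -> (1 <= m <= r)%nat ->
  (forall t, (1 <= t <= m)%nat -> c t = 8 * lam ^ 2) ->
  c 0%nat = - 8 * lam ^ 2 * (INR m - 1 / 2) ->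
  (forall t, (m < t <= r)%nat -> c t = 0) ->
  (forall t, (t <= r)%nat -> Rabs (c t - cb t) <= lam) ->
  (forall t, (1 <= t <= r)%nat -> 0 <= y t <= 1) ->
  ((forall s, (1 <= s <= m)%nat -> 1 - / (4 * INR m) <= y s) ->
     1 - exp (- lam ^ 2) <= sigma (affine r cb y)) /\
  ((exists s, (1 <= s <= m)%nat /\ y s <= / 8) ->
     sigma (affine r cb y) <= exp (- lam ^ 2)).
Proof.
  intros Hr Hm Hc Hc0 Hcz Hpert Hy.
  assert (E : affine r c y = 8 * lam ^ 2 * (sum1 m y - INR m + 1 / 2)).
  { unfold affine; rewrite (sum1_trunc r m), (sum1_ext m _ (fun t => 8 * lam ^ 2 * y t)),
      sum1_scal_l, Hc0; [ring|..].
    - intros t Ht; rewrite Hc by lia; reflexivity.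
    - lia.
    - intros t Ht; rewrite Hcz by lia; ring. }
  pose proof (Rabs_le_between _ _ (affine_perturb_unit r lam c cb y Hr Hpert Hy)) as P.
  assert (HmR : 1 <= INR m) by (apply (le_INR 1); lia).
  split.
  - intros Hhigh; apply sigma_ge_tail.
    assert (INR m * (1 - / (4 * INR m)) <= sum1 m y) by (rewrite <- sum1_const; apply sum1_le; auto).
    replace (INR m * (1 - / (4 * INR m))) with (INR m - 1 / 4) in * by (field; lra).
    pose proof (pow2_ge_0 lam); nra.
  - intros (s & Hs & Hys); apply sigma_le_tail.
    assert (sum1 m y <= INR m - 1 + y s) by (apply sum1_le_extract; [lia|intros; apply Hy; lia]).
    pose proof (pow2_ge_0 lam); nra.
Qed.

Lemma pass_gate r lam c cb y : 3 <= lam -> INR r + 1 <= lam -> (1 <= r)%nat ->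
  c 1%nat = 6 * lam ^ 2 -> c 0%nat = - 3 * lam ^ 2 ->
  (forall t, (1 < t <= r)%nat -> c t = 0) ->
  (forall t, (t <= r)%nat -> Rabs (c t - cb t) <= lam) ->
  (forall t, (1 <= t <= r)%nat -> 0 <= y t <= 1) ->
  (1 - exp (- lam ^ 2) <= y 1%nat -> 1 - exp (- lam ^ 2) <= sigma (affine r cb y)) /\
  (y 1%nat <= exp (- lam ^ 2) -> sigma (affine r cb y) <= exp (- lam ^ 2)).
Proof.
  intros Hlam Hr Hr1 Hc1 Hc0 Hcz Hpert Hy.
  assert (E : affine r c y = 3 * lam ^ 2 * (2 * y 1%nat - 1)).
  { rewrite (affine_single r c y 1), Hc1, Hc0; [ring|lia|].
    intros t Ht Hne; apply Hcz; lia. }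
  pose proof (Rabs_le_between _ _ (affine_perturb_unit r lam c cb y Hr Hpert Hy)) as P.
  pose proof (exp_neg_sqr_le_inv8 lam Hlam).
  pose proof (pow2_ge_0 lam).
  split; intros Hy1; [apply sigma_ge_tail|apply sigma_le_tail]; nra.
Qed.

Lemma box_of_preactivations d lam delta (u v x : nat -> R) :
  (1 <= d)%nat -> 3 <= lam -> 0 < delta <= 1 ->
  (forall j, (1 <= j <= d)%nat -> Rabs (u j) <= lam /\ Rabs (v j) <= lam) ->
  (forall j, (1 <= j <= d)%nat ->
     - (4 + lam * (1 + sum1 d (fun t => Rabs (x t)))) < 4 * INR d * lam ^ 2 / delta * (x j - u j) /\
     - (4 + lam * (1 + sum1 d (fun t => Rabs (x t)))) < 4 * INR d * lam ^ 2 / delta * (v j - x j)) ->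
  forall j, (1 <= j <= d)%nat -> u j - delta / 2 < x j < v j + delta / 2.
Proof.
  intros Hd Hlam Hdelta Huv Hpre.
  set (S := sum1 d (fun t => Rabs (x t))) in *.
  set (D := INR d) in *.
  set (T := 4 + lam * (1 + S)) in *.
  set (A := 4 * D * lam ^ 2 / delta) in *.
  assert (HD : 1 <= D) by (apply (le_INR 1); exact Hd).
  assert (HA : 0 < A) by (unfold A; apply Rdiv_lt_0_compat; nra).
  assert (HS0 : 0 <= S) by (apply sum1_nonneg; intros; apply Rabs_pos).
  set (rho := T / A).
  assert (HArho : A * rho = T) by (unfold rho; field; lra).
  assert (Hbox : forall j, (1 <= j <= d)%nat -> u j - rho < x j < v j + rho).
  { intros j Hj; destruct (Hpre j Hj) as [H1 H2]; split;
      apply (Rmult_lt_reg_l A); try lra; rewrite ?Rmult_minus_distr_l, ?Rmult_plus_distr_l; lra. }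
  (* The admissible error T grows with |x|, which is itself controlled by the box
     just obtained; the resulting linear inequality for T forces T < A delta / 2. *)
  assert (HS : S <= D * (lam + rho)).
  { apply sum1_le_const; intros t Ht.
    destruct (Huv t Ht) as [Hu Hv]; apply Rabs_le_between in Hu, Hv.
    destruct (Hbox t Ht); unfold Rabs; destruct Rcase_abs; lra. }
  assert (HT : 0 < T) by (unfold T; nra).
  assert (HDrho : D * rho * (4 * lam ^ 2) <= T).
  { replace (D * rho * (4 * lam ^ 2)) with (T * delta) by (unfold rho, A; field; nra). nra. }
  assert (HTbound : T * (4 * lam - 1) <= 4 * lam * (4 + lam + D * lam ^ 2)) by (unfold T in *; nra).
  assert (HTlt : T < 2 * D * lam ^ 2).
  { assert (lam * (2 * lam - 1) <= D * lam * (2 * lam - 1)) by (apply Rmult_le_compat_r; nra).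
    assert (0 < 2 * D * lam ^ 2 - D * lam - 2 * lam - 8) by nra.
    assert (0 < 2 * lam * (2 * D * lam ^ 2 - D * lam - 2 * lam - 8)) by nra.
    nra. }
  assert (Hrho : rho < delta / 2).
  { apply (Rmult_lt_reg_l A); [exact HA|]. rewrite HArho.
    replace (A * (delta / 2)) with (2 * D * lam ^ 2) by (unfold A; field; lra). exact HTlt. }
  intros j Hj; destruct (Hbox j Hj); lra.
Qed.

Definition cube_weights (w : weights) (d r L j0 : nat) (lam delta : R) (u v : nat -> R) : Prop :=
  (forall j, (1 <= j <= d)%nat ->
     w 0%nat j0 j j = 4 * INR d * lam ^ 2 / delta /\
     w 0%nat j0 j 0%nat = - (4 * INR d * lam ^ 2 * u j) / delta /\
     w 0%nat j0 (j + d)%nat j = - (4 * INR d * lam ^ 2) / delta /\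
     w 0%nat j0 (j + d)%nat 0%nat = 4 * INR d * lam ^ 2 * v j / delta) /\
  (forall s t, (1 <= s <= 2 * d)%nat -> (1 <= t <= d)%nat ->
     s <> t -> s <> (t + d)%nat -> w 0%nat j0 s t = 0) /\
  (forall t, (1 <= t <= 2 * d)%nat -> w 1%nat j0 1%nat t = 8 * lam ^ 2) /\
  w 1%nat j0 1%nat 0%nat = - 8 * lam ^ 2 * (2 * INR d - 1 / 2) /\
  (forall t, (2 * d < t <= r)%nat -> w 1%nat j0 1%nat t = 0) /\
  (forall l, (2 <= l <= L)%nat ->
     w l j0 1%nat 1%nat = 6 * lam ^ 2 /\ w l j0 1%nat 0%nat = - 3 * lam ^ 2 /\
     (forall t, (1 < t <= r)%nat -> w l j0 1%nat t = 0)).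

Definition weights_close (w wb : weights) (d r L j0 : nat) (lam : R) : Prop :=
  forall l k i, (l <= L - 1)%nat -> (1 <= k <= r)%nat ->
    (i <= (if l =? 0 then d else r))%nat -> Rabs (w l j0 k i - wb l j0 k i) <= lam.

(* The subnetwork [j0] carrying [cube_weights] is an approximate indicator of the box
   [u, v]; [A] is the slope of its first layer. *)
Section Cube_neuron.

Variables (d r L j0 : nat) (lam delta : R) (u v : nat -> R) (w wb : weights).

Hypothesis Hd : (1 <= d)%nat.
Hypothesis Hr : (2 * d <= r)%nat.
Hypothesis HL : (2 <= L)%nat.
Hypothesis Hlam : INR r + 1 <= lam.
Hypothesis Hdelta : 0 < delta <= 1.

Hypothesis Hw : cube_weights w d r L j0 lam delta u v.
Hypothesis Hpert : weights_close w wb d r L j0 lam.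

Local Notation tau := (exp (- lam ^ 2)).
Local Notation A := (4 * INR d * lam ^ 2 / delta).

Lemma cube_lam_ge_3 : 3 <= lam.
Proof. assert (2 <= INR r) by (apply (le_INR 2); lia). lra. Qed.

Lemma first_layer_preact j x : (1 <= j <= d)%nat ->
  Rabs (affine d (wb 0%nat j0 j) x - A * (x j - u j))
    <= lam * (1 + sum1 d (fun t => Rabs (x t))) /\
  Rabs (affine d (wb 0%nat j0 (j + d)%nat) x - A * (v j - x j))
    <= lam * (1 + sum1 d (fun t => Rabs (x t))).
Proof.
  intros Hj; destruct Hw as (Hw0 & Hw0z & _).
  destruct (Hw0 j Hj) as (Hjj & Hj0 & Hdj & Hd0); split.
  - replace (A * (x j - u j)) with (affine d (w 0%nat j0 j) x).
    + apply affine_perturb; intros i Hi; apply Hpert; simpl; lia.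
    + rewrite (affine_single d _ x j Hj), Hjj, Hj0; [field; lra|].
      intros t Ht Hne; apply Hw0z; lia.
  - replace (A * (v j - x j)) with (affine d (w 0%nat j0 (j + d)%nat) x).
    + apply affine_perturb; intros i Hi; apply Hpert; simpl; lia.
    + rewrite (affine_single d _ x j Hj), Hdj, Hd0; [field; lra|].
      intros t Ht Hne; apply Hw0z; lia.
Qed.

Lemma second_layer x :
  ((forall s, (1 <= s <= 2 * d)%nat -> 1 - / (4 * INR (2 * d)) <= hid wb d r 0 j0 s x) ->
     1 - tau <= hid wb d r 1 j0 1 x) /\
  ((exists s, (1 <= s <= 2 * d)%nat /\ hid wb d r 0 j0 s x <= / 8) ->
     hid wb d r 1 j0 1 x <= tau).
Proof.
  destruct Hw as (_ & _ & Hw1 & Hw10 & Hw1z & _).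
  rewrite hid_S; apply (and_gate (2 * d) r lam (w 1%nat j0 1%nat)); auto; try lia.
  - rewrite Hw10, mult_INR; simpl; ring.
  - intros t Ht; apply Hpert; simpl; lia.
  - intros t Ht; pose proof (hid_bounds wb d r 0 j0 t x); lra.
Qed.

Lemma deep_layers x p : (1 <= p <= L - 1)%nat ->
  (1 - tau <= hid wb d r 1 j0 1 x -> 1 - tau <= hid wb d r p j0 1 x) /\
  (hid wb d r 1 j0 1 x <= tau -> hid wb d r p j0 1 x <= tau).
Proof.
  induction p as [|p IH]; intros Hp; [lia|].
  destruct (Nat.eq_dec p 0) as [->|Hp0]; [tauto|].
  destruct (IH ltac:(lia)) as [IHhigh IHlow].
  destruct Hw as (_ & _ & _ & _ & _ & Hwl).
  destruct (Hwl (S p) ltac:(lia)) as (Hc1 & Hc0 & Hcz).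
  rewrite hid_S.
  destruct (pass_gate r lam (w (S p) j0 1%nat) (wb (S p) j0 1%nat) (fun j => hid wb d r p j0 j x)
              cube_lam_ge_3 Hlam ltac:(lia) Hc1 Hc0 Hcz) as [Phigh Plow].
  - intros t Ht; apply Hpert; [lia|lia|destruct p; simpl; lia].
  - intros t Ht; pose proof (hid_bounds wb d r p j0 t x); lra.
  - split; auto.
Qed.

Lemma cube_neuron_high x :
  (forall i, (1 <= i <= d)%nat -> Rabs (x i) <= lam /\ u i + delta / 2 <= x i <= v i - delta / 2) ->
  1 - tau <= hid wb d r (L - 1) j0 1 x.
Proof.
  intros Hx.
  apply (proj1 (deep_layers x (L - 1) ltac:(lia))), (proj1 (second_layer x)).
  assert (HS : sum1 d (fun t => Rabs (x t)) <= INR d * lam)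
    by (apply sum1_le_const; intros t Ht; apply Hx, Ht).
  assert (HD : 1 <= INR d) by (apply (le_INR 1); exact Hd).
  assert (Hlam3 := cube_lam_ge_3).
  assert (HAd : A * (delta / 2) = 2 * INR d * lam ^ 2) by (field; lra).
  assert (HA : 0 < A) by (apply Rdiv_lt_0_compat; nra).
  assert (Hmargin : lam * (1 + sum1 d (fun t => Rabs (x t))) <= 2 * INR d * lam ^ 2 - 4 * INR d).
  { assert (1 * (lam ^ 2 - 4) <= INR d * (lam ^ 2 - 4)) by (apply Rmult_le_compat_r; nra). nra. }
  assert (Hsig : forall z, 4 * INR d <= z -> 1 - / (4 * INR (2 * d)) <= sigma z).
  { intros z Hz; apply sigma_ge_1_sub_inv4; [apply lt_0_INR; lia|].
    rewrite mult_INR; simpl; lra. }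
  intros s Hs; rewrite hid_0.
  destruct (Nat.le_gt_cases s d) as [Hsd|Hsd].
  - destruct (first_layer_preact s x ltac:(lia)) as [P _]; apply Rabs_le_between in P.
    destruct (Hx s ltac:(lia)) as [_ Hxs].
    assert (A * (delta / 2) <= A * (x s - u s)) by (apply Rmult_le_compat_l; lra).
    apply Hsig; lra.
  - replace s with (s - d + d)%nat by lia.
    destruct (first_layer_preact (s - d) x ltac:(lia)) as [_ P]; apply Rabs_le_between in P.
    destruct (Hx (s - d)%nat ltac:(lia)) as [_ Hxs].
    assert (A * (delta / 2) <= A * (v (s - d)%nat - x (s - d)%nat))
      by (apply Rmult_le_compat_l; lra).
    apply Hsig; lra.
Qed.

Lemma cube_neuron_box :
  (forall j, (1 <= j <= d)%nat -> Rabs (u j) <= lam /\ Rabs (v j) <= lam) ->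
  forall x, tau < hid wb d r (L - 1) j0 1 x ->
  forall j, (1 <= j <= d)%nat -> u j - delta / 2 < x j < v j + delta / 2.
Proof.
  intros Huv x Hactive.
  assert (Hfirst : forall s, (1 <= s <= 2 * d)%nat -> / 8 < hid wb d r 0 j0 s x).
  { intros s Hs; apply Rnot_le_lt; intros Hlow.
    apply (Rlt_not_le _ _ Hactive), (proj2 (deep_layers x (L - 1) ltac:(lia))),
      (proj2 (second_layer x)).
    exists s; auto. }
  apply (box_of_preactivations d lam delta u v x Hd cube_lam_ge_3 Hdelta Huv).
  intros j Hj; destruct (first_layer_preact j x Hj) as [P1 P2].
  apply Rabs_le_between in P1, P2.
  pose proof (Hfirst j ltac:(lia)) as H1; pose proof (Hfirst (j + d)%nat ltac:(lia)) as H2.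
  rewrite hid_0 in H1, H2.
  assert (Z1 : -4 < affine d (wb 0%nat j0 j) x)
    by (apply Rnot_le_lt; intros Hz; apply sigma_le_inv8 in Hz; lra).
  assert (Z2 : -4 < affine d (wb 0%nat j0 (j + d)%nat) x)
    by (apply Rnot_le_lt; intros Hz; apply sigma_le_inv8 in Hz; lra).
  split; lra.
Qed.

End Cube_neuron.

Fixpoint digit (K i k : nat) : nat :=
  match i with
  | O => k mod K
  | S i' => digit K i' (k / K)
  end.

Lemma digit_lt K i k : (0 < K)%nat -> (digit K i k < K)%nat.
Proof.
  revert k; induction i as [|i IH]; intros k HK; simpl; [apply Nat.mod_upper_bound; lia|auto].
Qed.

Lemma digits_inj K D k k' : (0 < K)%nat -> (k < K ^ D)%nat -> (k' < K ^ D)%nat ->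
  (forall i, (i < D)%nat -> digit K i k = digit K i k') -> k = k'.
Proof.
  revert k k'; induction D as [|D IH]; intros k k' HK Hk Hk' H; simpl in Hk, Hk'; [lia|].
  rewrite (Nat.div_mod_eq k K), (Nat.div_mod_eq k' K).
  rewrite (IH (k / K) (k' / K))%nat; auto.
  - f_equal; apply (H 0%nat); lia.
  - apply Nat.Div0.div_lt_upper_bound; exact Hk.
  - apply Nat.Div0.div_lt_upper_bound; exact Hk'.
  - intros i Hi; apply (H (S i)); lia.
Qed.

Lemma digits_surj K D (P : nat -> nat -> Prop) :
  (forall i, (i < D)%nat -> exists c, (c < K)%nat /\ P i c) ->
  exists k, (k < K ^ D)%nat /\ forall i, (i < D)%nat -> P i (digit K i k).
Proof.
  revert P; induction D as [|D IH]; intros P H.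
  - exists 0%nat; split; [simpl; lia|intros; lia].
  - destruct (IH (fun i => P (S i))) as (k & Hk & Hdig); [intros i Hi; apply H; lia|].
    destruct (H 0%nat ltac:(lia)) as (c & Hc & HPc).
    exists (c + k * K)%nat; split; [simpl; nia|].
    intros [|i] Hi; simpl.
    + rewrite Nat.Div0.mod_add, Nat.mod_small; assumption.
    + rewrite Nat.div_add, Nat.div_small by lia; apply Hdig; lia.
Qed.

Lemma grid_cell (ai q delta xi : R) (K : nat) : 0 < delta ->
  ai <= xi <= ai + INR K * q ->
  (forall j, (j <= K)%nat -> ~ Rabs (xi - (ai + INR j * q)) < delta) ->
  exists c, (c < K)%nat /\ ai + INR c * q + delta <= xi <= ai + INR c * q + q - delta.
Proof.
  intros Hdelta; induction K as [|K IH]; intros Hx Hoff.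
  - exfalso; apply (Hoff 0%nat); [lia|]. simpl in *.
    replace (xi - (ai + 0 * q)) with 0 by lra; rewrite Rabs_R0; exact Hdelta.
  - destruct (Rle_lt_dec xi (ai + INR K * q)) as [Hle|Hlt].
    + destruct IH as (c & Hc & Hcx); [lra|intros j Hj; apply Hoff; lia|].
      exists c; split; [lia|exact Hcx].
    + exists K; split; [lia|]. rewrite S_INR in Hx.
      pose proof (Hoff K ltac:(lia)) as H1; pose proof (Hoff (S K) ltac:(lia)) as H2.
      rewrite S_INR in H2; apply Rnot_lt_le in H1, H2.
      rewrite Rabs_right in H1 by lra; rewrite Rabs_left1 in H2 by lra; lra.
Qed.

(* Cube [k] (for [1 <= k <= K ^ d]) of the grid is the one whose position along
   coordinate [i] (for [1 <= i <= d]) is the [(i-1)]-th base-[K] digit of [k - 1]. *)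
Definition grid_corner (K : nat) (a : nat -> R) (q : R) (k i : nat) : R :=
  a i + INR (digit K (i - 1) (k - 1)) * q.

Lemma grid_corner_range K a q k i : (0 < K)%nat -> 0 <= q ->
  a i <= grid_corner K a q k i <= a i + INR K * q - q.
Proof.
  intros HK Hq; unfold grid_corner.
  assert (INR (digit K (i - 1) (k - 1)) + 1 <= INR K)
    by (rewrite <- S_INR; apply le_INR, digit_lt, HK).
  pose proof (pos_INR (digit K (i - 1) (k - 1))); nra.
Qed.

Lemma grid_corners_separated K d a q k k' : (0 < K)%nat -> 0 <= q ->
  (1 <= k <= K ^ d)%nat -> (1 <= k' <= K ^ d)%nat -> k <> k' ->
  exists i, (1 <= i <= d)%nat /\
    (grid_corner K a q k i + q <= grid_corner K a q k' i \/
     grid_corner K a q k' i + q <= grid_corner K a q k i).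
Proof.
  intros HK Hq Hk Hk' Hne.
  destruct (classic (forall i, (i < d)%nat -> digit K i (k - 1) = digit K i (k' - 1)))
    as [Hall|Hsome].
  - exfalso; apply Hne; apply digits_inj in Hall; lia.
  - apply not_all_ex_not in Hsome as [i Hi].
    apply imply_to_and in Hi as [Hid Hdi].
    exists (S i); split; [lia|]. unfold grid_corner.
    replace (S i - 1)%nat with i by lia.
    destruct (Nat.lt_total (digit K i (k - 1)) (digit K i (k' - 1))) as [Hlt|[Heq|Hgt]];
      [left|contradiction|right].
    + apply le_INR in Hlt; rewrite S_INR in Hlt; nra.
    + apply le_INR in Hgt; rewrite S_INR in Hgt; nra.
Qed.

Lemma grid_corner_cover K d a q delta x : 0 < delta ->
  (forall i, (1 <= i <= d)%nat -> a i <= x i <= a i + INR K * q) ->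
  (forall j i, (j <= K)%nat -> (1 <= i <= d)%nat -> ~ Rabs (x i - (a i + INR j * q)) < delta) ->
  exists k, (1 <= k <= K ^ d)%nat /\ forall i, (1 <= i <= d)%nat ->
    grid_corner K a q k i + delta <= x i <= grid_corner K a q k i + q - delta.
Proof.
  intros Hdelta Hx Hoff.
  destruct (digits_surj K d (fun i c =>
      a (S i) + INR c * q + delta <= x (S i) <= a (S i) + INR c * q + q - delta))
    as (k & Hk & Hdig).
  { intros i Hi; apply grid_cell; [exact Hdelta|apply Hx; lia|intros j Hj; apply Hoff; lia]. }
  exists (S k); split; [lia|]. intros i Hi; unfold grid_corner.
  replace (S k - 1)%nat with k by lia.
  specialize (Hdig (i - 1)%nat ltac:(lia)); replace (S (i - 1)) with i in Hdig by lia; lra.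
Qed.

Lemma sup_norm_is_bound m M : sup_norm_is m M -> forall y, Rabs (m y) <= M.
Proof. intros [Hub _] y; apply Hub; exists y; reflexivity. Qed.

Lemma lipschitz_d_nonneg d m C : (1 <= d)%nat -> lipschitz_d d m C -> 0 <= C.
Proof.
  intros Hd Hlip; pose proof (Hlip (fun _ => 0) (fun _ => 1)) as H; unfold dist_d in H.
  rewrite (sum1_ext d _ (fun _ => 1)), sum1_const, Rmult_1_r in H by (intros; ring).
  pose proof (sqrt_lt_R0 (INR d) (lt_0_INR d ltac:(lia))).
  pose proof (Rabs_pos (m (fun _ => 0) - m (fun _ => 1))).
  destruct (Rle_lt_dec 0 C); [assumption|nra].
Qed.

Lemma dist_d_le d x y e : 0 <= e ->
  (forall i, (1 <= i <= d)%nat -> Rabs (x i - y i) <= e) -> dist_d d x y <= sqrt (INR d) * e.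
Proof.
  intros He H; unfold dist_d.
  rewrite <- (sqrt_pow2 e He), <- sqrt_mult_alt by apply pos_INR.
  apply sqrt_le_1_alt, sum1_le_const; intros i Hi.
  pose proof (Rabs_le_between _ _ (H i Hi)); nra.
Qed.

Lemma Rabs_sum1_one_active N c h M tau k0 : (1 <= k0 <= N)%nat -> 0 <= tau ->
  (forall k, (1 <= k <= N)%nat -> Rabs (c k) <= M /\ 0 <= h k) ->
  (forall k, (1 <= k <= N)%nat -> k <> k0 -> h k <= tau) ->
  Rabs (sum1 N (fun k => c k * h k) - c k0 * h k0) <= INR N * (M * tau).
Proof.
  intros Hk0 Htau Hch Hidle.
  assert (HM : 0 <= M) by (pose proof (Rabs_pos (c k0)); pose proof (Hch k0 Hk0); lra).
  rewrite (sum1_extract N _ k0 Hk0), <- sum1_const.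
  match goal with |- Rabs (?a + ?S - ?a) <= _ => replace (a + S - a) with S by ring end.
  apply Rabs_sum1_le; intros k Hk; destruct (Nat.eq_dec k k0) as [->|Hne].
  - rewrite Rabs_R0; nra.
  - destruct (Hch k Hk) as [Hc Hh]; rewrite Rabs_mult, (Rabs_pos_eq (h k) Hh).
    apply Rmult_le_compat; auto using Rabs_pos.
Qed.

Section Grid_network.

Variables (d K : nat) (a : nat -> R) (q delta M tau : R) (m : (nat -> R) -> R).
Variable h : nat -> (nat -> R) -> R.

Hypothesis HK : (0 < K)%nat.
Hypothesis Hq : 0 < q.
Hypothesis Hdelta : 0 < delta.
Hypothesis Htau : 0 <= tau.
Hypothesis Hm : forall y, Rabs (m y) <= M.
Hypothesis Hh : forall k x, 0 <= h k x <= 1.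
Hypothesis Hhigh : forall k x, (1 <= k <= K ^ d)%nat ->
  (forall i, (1 <= i <= d)%nat ->
     grid_corner K a q k i + delta <= x i <= grid_corner K a q k i + q - delta) ->
  1 - tau <= h k x.
Hypothesis Hactive : forall k x, (1 <= k <= K ^ d)%nat -> tau < h k x ->
  forall i, (1 <= i <= d)%nat -> grid_corner K a q k i < x i < grid_corner K a q k i + q.

Local Notation N := (K ^ d)%nat.
Local Notation net x := (sum1 N (fun k => m (grid_corner K a q k) * h k x)).

Lemma grid_net_at_most_one_active x :
  exists k0, (1 <= k0 <= N)%nat /\ forall k, (1 <= k <= N)%nat -> k <> k0 -> h k x <= tau.
Proof.
  destruct (classic (exists k0, (1 <= k0 <= N)%nat /\ tau < h k0 x)) as [(k0 & Hk0 & Hact0)|Hnone].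
  - exists k0; split; [exact Hk0|]. intros k Hk Hne; apply Rnot_lt_le; intros Hact.
    destruct (grid_corners_separated K d a q k k0 HK (Rlt_le _ _ Hq) Hk Hk0 Hne) as (i & Hi & Hsep).
    pose proof (Hactive k x Hk Hact i Hi); pose proof (Hactive k0 x Hk0 Hact0 i Hi); lra.
  - exists 1%nat; split; [pose proof (Nat.pow_nonzero K d ltac:(lia)); lia|].
    intros k Hk _; apply Rnot_lt_le; intros Hact; apply Hnone; exists k; auto.
Qed.

Lemma grid_net_bound x : Rabs (net x) <= M + INR N * (M * tau).
Proof.
  destruct (grid_net_at_most_one_active x) as (k0 & Hk0 & Hidle).
  pose proof (Rabs_sum1_one_active N (fun k => m (grid_corner K a q k)) (fun k => h k x) M tau k0
                Hk0 Htau ltac:(intros; split; [apply Hm|apply Hh]) Hidle).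
  assert (Rabs (m (grid_corner K a q k0) * h k0 x) <= M).
  { rewrite Rabs_mult, (Rabs_pos_eq (h k0 x)), <- (Rmult_1_r M) by apply Hh.
    apply Rmult_le_compat; [apply Rabs_pos|apply Hh|apply Hm|apply Hh]. }
  pose proof (Rabs_triang_inv (net x) (m (grid_corner K a q k0) * h k0 x)); lra.
Qed.

Lemma grid_net_approx Clip x : (1 <= d)%nat -> lipschitz_d d m Clip ->
  (forall i, (1 <= i <= d)%nat -> a i <= x i <= a i + INR K * q) ->
  (forall j i, (j <= K)%nat -> (1 <= i <= d)%nat -> ~ Rabs (x i - (a i + INR j * q)) < delta) ->
  Rabs (net x - m x) <= Clip * (sqrt (INR d) * q) + (INR N + 1) * (M * tau).
Proof.
  intros Hd Hlip Hx Hoff.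
  destruct (grid_corner_cover K d a q delta x Hdelta Hx Hoff) as (k0 & Hk0 & Hin).
  set (p := grid_corner K a q k0).
  assert (Hidle : forall k, (1 <= k <= N)%nat -> k <> k0 -> h k x <= tau).
  { intros k Hk Hne; apply Rnot_lt_le; intros Hact.
    destruct (grid_corners_separated K d a q k k0 HK (Rlt_le _ _ Hq) Hk Hk0 Hne) as (i & Hi & Hsep).
    pose proof (Hactive k x Hk Hact i Hi); pose proof (Hin i Hi); lra. }
  pose proof (Rabs_sum1_one_active N (fun k => m (grid_corner K a q k)) (fun k => h k x) M tau k0
                Hk0 Htau ltac:(intros; split; [apply Hm|apply Hh]) Hidle) as Hrest.
  assert (Hone : Rabs (m p * (h k0 x - 1)) <= M * tau).
  { rewrite Rabs_mult, (Rabs_left1 (h k0 x - 1)) by (pose proof (Hh k0 x); lra).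
    pose proof (Hhigh k0 x Hk0 Hin); pose proof (Hh k0 x).
    apply Rmult_le_compat; [apply Rabs_pos|lra|apply Hm|lra]. }
  assert (Hlip_p : Rabs (m p - m x) <= Clip * (sqrt (INR d) * q)).
  { eapply Rle_trans; [apply Hlip|]. apply Rmult_le_compat_l; [eapply lipschitz_d_nonneg; eauto|].
    apply dist_d_le; [lra|]. intros i Hi; pose proof (Hin i Hi); unfold p.
    rewrite Rabs_left1; lra. }
  replace (net x - m x) with ((net x - m p * h k0 x) + m p * (h k0 x - 1) + (m p - m x)) by ring.
  pose proof (Rabs_triang (net x - m p * h k0 x + m p * (h k0 x - 1)) (m p - m x)).
  pose proof (Rabs_triang (net x - m p * h k0 x) (m p * (h k0 x - 1))).
  cbv beta in Hrest; fold p in Hrest; lra.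
Qed.

End Grid_network.

Lemma off_grid_mesh_ge (ai q delta xi : R) (K : nat) : 0 < delta ->
  ai <= xi <= ai + INR K * q ->
  (forall j, (j <= K)%nat -> ~ Rabs (xi - (ai + INR j * q)) < delta) -> 2 * delta <= q.
Proof. intros Hdelta Hx Hoff; destruct (grid_cell ai q delta xi K Hdelta Hx Hoff) as (c & _ & Hc); lra. Qed.

Lemma grid_cube_neuron K a q d r L j0 lam delta w wb k :
  (1 <= d)%nat -> (2 * d <= r)%nat -> (2 <= L)%nat -> INR r + 1 <= lam ->
  0 < delta <= 1 -> delta <= q -> (0 < K)%nat ->
  (forall i, (1 <= i <= d)%nat -> Rabs (a i) <= lam /\ Rabs (a i + INR K * q) <= lam) ->
  cube_weights w d r L j0 lam delta
    (fun i => grid_corner K a q k i + delta / 2) (fun i => grid_corner K a q k i + q - delta / 2) ->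
  weights_close w wb d r L j0 lam ->
  (forall x, (forall i, (1 <= i <= d)%nat ->
       grid_corner K a q k i + delta <= x i <= grid_corner K a q k i + q - delta) ->
     1 - exp (- lam ^ 2) <= hid wb d r (L - 1) j0 1 x) /\
  (forall x, exp (- lam ^ 2) < hid wb d r (L - 1) j0 1 x ->
     forall i, (1 <= i <= d)%nat -> grid_corner K a q k i < x i < grid_corner K a q k i + q).
Proof.
  intros Hd Hr HL Hlam Hdelta Hnarrow HK Ha Hw Hpert.
  assert (Hcorner : forall i, (1 <= i <= d)%nat ->
    - lam <= grid_corner K a q k i /\ grid_corner K a q k i + q <= lam).
  { intros i Hi; pose proof (grid_corner_range K a q k i HK ltac:(lra)).
    destruct (Ha i Hi) as [Hai Hbi]; apply Rabs_le_between in Hai, Hbi; lra. }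
  split.
  - intros x Hx; apply (cube_neuron_high d r L j0 lam delta
      (fun i => grid_corner K a q k i + delta / 2) (fun i => grid_corner K a q k i + q - delta / 2)
      w wb Hd Hr HL Hlam Hdelta Hw Hpert).
    intros i Hi; destruct (Hcorner i Hi), (Hx i Hi).
    split; [apply Rabs_le|]; lra.
  - intros x Hx i Hi.
    destruct (cube_neuron_box d r L j0 lam delta
      (fun i => grid_corner K a q k i + delta / 2) (fun i => grid_corner K a q k i + q - delta / 2)
      w wb Hd Hr HL Hlam Hdelta Hw Hpert) with x i; auto; [|lra].
    intros j Hj; destruct (Hcorner j Hj); split; apply Rabs_le; lra.
Qed.

Lemma fnet_selected wb d r L Kn N (jj : nat -> nat) x :
  (forall k, (1 <= k <= N)%nat -> (1 <= jj k <= Kn)%nat) ->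
  (forall k k', (1 <= k <= N)%nat -> (1 <= k' <= N)%nat -> jj k = jj k' -> k = k') ->
  (forall j, (1 <= j <= Kn)%nat -> (forall k, (1 <= k <= N)%nat -> j <> jj k) ->
     wb L 1%nat 1%nat j = 0) ->
  fnet wb d r L Kn x
    = sum1 N (fun k => wb L 1%nat 1%nat (jj k) * hid wb d r (L - 1) (jj k) 1%nat x).
Proof.
  intros Hrange Hinj Hzero; unfold fnet.
  apply (sum1_reindex N Kn jj (fun j => wb L 1%nat 1%nat j * hid wb d r (L - 1) j 1%nat x)); auto.
  intros j Hj Hj'; rewrite Hzero by assumption; ring.
Qed.

Lemma ln_ge_of_exp_le x y : exp x <= y -> x <= ln y.
Proof.
  intros H; pose proof (exp_pos x).
  apply Rnot_lt_le; intros Hlt; apply exp_increasing in Hlt; rewrite exp_ln in Hlt; lra.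
Qed.

Lemma exp_neg_sqr_ln_le_inv y : 0 < y -> 1 <= ln y -> exp (- ln y ^ 2) <= / y.
Proof.
  intros Hy Hln; rewrite <- (exp_ln y Hy) at 2; rewrite <- exp_Ropp.
  apply exp_le_exp_of_le; nra.
Qed.

Lemma grid_error_le s N Clip q M tau n : 0 <= s -> 1 <= N -> 0 <= Clip -> 0 <= q ->
  0 <= M -> 0 < n -> 0 <= tau <= / n ->
  Clip * (s * q) + (N + 1) * (M * tau) <= (s + 2 * M + 1) * (Clip * q + N * (1 / n)).
Proof.
  intros Hs HN HClip Hq HM Hn Htau.
  unfold Rdiv; rewrite Rmult_1_l; pose proof (Rinv_0_lt_compat _ Hn).
  assert (M * tau <= M * / n) by (apply Rmult_le_compat_l; lra).
  assert (0 <= M * / n) by (apply Rmult_le_pos; lra).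
  assert (0 <= Clip * q) by (apply Rmult_le_pos; lra).
  assert (0 <= N * / n) by (apply Rmult_le_pos; lra).
  assert (0 <= M * (Clip * q)) by (apply Rmult_le_pos; lra).
  assert (0 <= s * (N * / n)) by (apply Rmult_le_pos; lra).
  nra.
Qed.

Theorem lemma6 :
  forall (d : nat) (M : R), (1 <= d)%nat ->
  exists c19 : R, 0 < c19 /\
  forall (delta alphan Clip Delta : R) (m : (nat -> R) -> R)
         (L r n K Kn : nat) (a b : nat -> R),
    0 < delta -> delta <= 1 ->
    1 <= alphan -> alphan <= ln (INR n) ->
    lipschitz_d d m Clip ->
    sup_norm_is m M ->
    (2 <= L)%nat -> (2 * d <= r)%nat -> (8 * d <= n)%nat ->
    exp (INR r + 1) <= INR n ->
    (1 <= K)%nat -> (K ^ d <= Kn)%nat ->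
    0 < Delta ->
    (forall i, (1 <= i <= d)%nat ->
       - alphan <= a i <= alphan /\ - alphan <= b i <= alphan /\
       b i - a i = Delta) ->
    exists (alpha : nat -> R) (u v : nat -> nat -> R),
      (forall k, (1 <= k <= K ^ d)%nat -> - M <= alpha k <= M) /\
      (forall k, (1 <= k <= K ^ d)%nat -> forall i, (1 <= i <= d)%nat ->
         a i <= u k i < b i /\ a i <= v k i < b i) /\
      forall (jj : nat -> nat) (w wb : weights),
        (* j_1, ..., j_{K^d} pairwise distinct in {1,...,K_n} *)
        (forall k, (1 <= k <= K ^ d)%nat -> (1 <= jj k <= Kn)%nat) ->
        (forall k k', (1 <= k <= K ^ d)%nat -> (1 <= k' <= K ^ d)%nat ->
           jj k = jj k' -> k = k') ->
        (* conditions on w *)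
        (forall k, (1 <= k <= K ^ d)%nat ->
           (forall j, (1 <= j <= d)%nat ->
              w 0%nat (jj k) j j = 4 * INR d * ln (INR n) ^ 2 / delta /\
              w 0%nat (jj k) j 0%nat = - (4 * INR d * ln (INR n) ^ 2 * u k j) / delta /\
              w 0%nat (jj k) (j + d)%nat j = - (4 * INR d * ln (INR n) ^ 2) / delta /\
              w 0%nat (jj k) (j + d)%nat 0%nat = 4 * INR d * ln (INR n) ^ 2 * v k j / delta) /\
           (forall s t, (1 <= s <= 2 * d)%nat -> (1 <= t <= d)%nat ->
              s <> t -> s <> (t + d)%nat -> w 0%nat (jj k) s t = 0) /\
           (forall t, (1 <= t <= 2 * d)%nat -> w 1%nat (jj k) 1%nat t = 8 * ln (INR n) ^ 2) /\
           w 1%nat (jj k) 1%nat 0%nat = - 8 * ln (INR n) ^ 2 * (2 * INR d - 1 / 2) /\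
           (forall t, (2 * d < t <= r)%nat -> w 1%nat (jj k) 1%nat t = 0) /\
           (forall l, (2 <= l <= L)%nat ->
              w l (jj k) 1%nat 1%nat = 6 * ln (INR n) ^ 2 /\
              w l (jj k) 1%nat 0%nat = - 3 * ln (INR n) ^ 2 /\
              (forall t, (1 < t <= r)%nat -> w l (jj k) 1%nat t = 0))) ->
        (* conditions on \bar w *)
        (forall k, (1 <= k <= K ^ d)%nat -> wb L 1%nat 1%nat (jj k) = alpha k) ->
        (forall k, (1 <= k <= Kn)%nat ->
           (forall s, (1 <= s <= K ^ d)%nat -> k <> jj s) ->
           wb L 1%nat 1%nat k = 0) ->
        (forall l s k i, (l <= L - 1)%nat -> (1 <= s <= K ^ d)%nat ->
           (1 <= k <= r)%nat -> (i <= (if l =? 0 then d else r))%nat ->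
           Rabs (w l (jj s) k i - wb l (jj s) k i) <= ln (INR n)) ->
        (* approximation away from the grid neighbourhoods *)
        (forall x : nat -> R,
           (forall i, (1 <= i <= d)%nat -> a i <= x i <= b i) ->
           (forall j i, (j <= K)%nat -> (1 <= i <= d)%nat ->
              ~ (Rabs (x i - (a i + INR j * (b i - a i) / INR K)) < delta)) ->
           Rabs (fnet wb d r L Kn x - m x)
             <= c19 * (Clip * (Delta / INR K) + INR (K ^ d) * (1 / INR n))) /\
        (* global bound *)
        (delta <= Delta / INR K ->
           forall x : nat -> R,
             Rabs (fnet wb d r L Kn x) <= M * (3 ^ d + INR (K ^ d) / INR n)).
Proof.
  intros d M Hd; exists (sqrt (INR d) + 2 * Rabs M + 1); split.
  { pose proof (sqrt_pos (INR d)); pose proof (Rabs_pos M); lra. }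
  intros delta alphan Clip Delta m L r n K Kn a b Hdelta0 Hdelta1 Halpha1 Halpha2 Hlip Hsup
    HL Hr Hn Hexp HK HKn HDelta Hab.
  set (lam := ln (INR n)) in *; set (q := Delta / INR K).
  assert (Hn0 : 0 < INR n) by (pose proof (exp_pos (INR r + 1)); lra).
  assert (Hlam : INR r + 1 <= lam) by (apply ln_ge_of_exp_le, Hexp).
  assert (Htau : exp (- lam ^ 2) <= / INR n)
    by (apply exp_neg_sqr_ln_le_inv; [exact Hn0|fold lam; pose proof (pos_INR r); lra]).
  pose proof (sup_norm_is_bound m M Hsup) as Hm.
  assert (HM : 0 <= M) by (eapply Rle_trans; [apply Rabs_pos|apply (Hm (fun _ => 0))]).
  assert (Hq : 0 < q) by (apply Rdiv_lt_0_compat; [lra|apply lt_0_INR; lia]).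
  assert (Hb : forall i, (1 <= i <= d)%nat ->
    b i = a i + INR K * q /\ Rabs (a i) <= lam /\ Rabs (a i + INR K * q) <= lam).
  { intros i Hi; destruct (Hab i Hi) as (Ha & Hb & E).
    assert (b i = a i + INR K * q) by (unfold q; rewrite <- E; field; apply not_0_INR; lia).
    split; [assumption|split; apply Rabs_le; lra]. }
  assert (Hgrid : forall x, (forall j i, (j <= K)%nat -> (1 <= i <= d)%nat ->
        ~ Rabs (x i - (a i + INR j * (b i - a i) / INR K)) < delta) ->
      forall j i, (j <= K)%nat -> (1 <= i <= d)%nat -> ~ Rabs (x i - (a i + INR j * q)) < delta).
  { intros x Hoff j i Hj Hi; replace (INR j * q) with (INR j * (b i - a i) / INR K); auto.
    destruct (Hab i Hi) as (_ & _ & ->); unfold q, Rdiv; ring. }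
  destruct (Rle_lt_dec delta q) as [Hnarrow|Hwide].
  (* If [q < delta], no point is [delta]-far from the grid and [delta <= q] fails. *)
  2: { exists (fun _ => 0), (fun _ i => a i), (fun _ i => a i).
       split; [intros; lra|split].
       { intros k Hk i Hi; destruct (Hb i Hi) as (-> & _).
         pose proof (Rmult_lt_0_compat _ _ (lt_0_INR K ltac:(lia)) Hq); lra. }
       intros jj w wb _ _ _ _ _ _; split; [|intros; lra].
       intros x Hx Hoff; exfalso.
       assert (Hx1 : a 1%nat <= x 1%nat <= a 1%nat + INR K * q)
         by (rewrite <- (proj1 (Hb 1%nat ltac:(lia))); apply Hx; lia).
       pose proof (off_grid_mesh_ge _ _ _ _ K Hdelta0 Hx1
         (fun j Hj => Hgrid x Hoff j 1%nat Hj ltac:(lia))); lra. }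
  exists (fun k => m (grid_corner K a q k)),
    (fun k i => grid_corner K a q k i + delta / 2), (fun k i => grid_corner K a q k i + q - delta / 2).
  split; [intros; apply Rabs_le_between, Hm|split].
  { intros k Hk i Hi; pose proof (grid_corner_range K a q k i ltac:(lia) ltac:(lra)).
    destruct (Hb i Hi) as (-> & _); lra. }
  intros jj w wb Hjj Hinj Hw Hwb Hwb0 Hpert.
  set (h := fun k => hid wb d r (L - 1) (jj k) 1%nat).
  assert (Hnet : forall x, fnet wb d r L Kn x = sum1 (K ^ d) (fun k => m (grid_corner K a q k) * h k x)).
  { intros x; rewrite (fnet_selected wb d r L Kn (K ^ d) jj x Hjj Hinj Hwb0).
    apply sum1_ext; intros k Hk; rewrite Hwb by exact Hk; reflexivity. }
  assert (Hh : forall k x, 0 <= h k x <= 1)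
    by (intros k x; pose proof (hid_bounds wb d r (L - 1) (jj k) 1 x); unfold h; lra).
  assert (Hcube : forall k, (1 <= k <= K ^ d)%nat -> _)
    by (intros k Hk; exact (grid_cube_neuron K a q d r L (jj k) lam delta w wb k Hd Hr HL Hlam
          ltac:(lra) Hnarrow ltac:(lia) (fun i Hi => proj2 (Hb i Hi)) (Hw k Hk)
          (fun l k' i Hl => Hpert l k k' i Hl Hk))).
  assert (HN : 1 <= INR (K ^ d)) by (apply (le_INR 1); pose proof (Nat.pow_nonzero K d); lia).
  pose proof (exp_pos (- lam ^ 2)).
  split.
  - intros x Hx Hoff; rewrite Hnet.
    eapply Rle_trans; [apply (grid_net_approx d K a q delta M (exp (- lam ^ 2)) m h
      ltac:(lia) Hq Hdelta0 ltac:(lra) Hm Hh (fun k x Hk => proj1 (Hcube k Hk) x)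
      (fun k x Hk => proj2 (Hcube k Hk) x) Clip x Hd Hlip)|].
    + intros i Hi; rewrite <- (proj1 (Hb i Hi)); auto.
    + exact (Hgrid x Hoff).
    + rewrite Rabs_pos_eq by exact HM.
      pose proof (lipschitz_d_nonneg d m Clip Hd Hlip).
      apply grid_error_le; auto using sqrt_pos; lra.
  - intros _ x; rewrite Hnet.
    eapply Rle_trans; [apply (grid_net_bound d K a q M (exp (- lam ^ 2)) m h
      ltac:(lia) Hq ltac:(lra) Hm Hh (fun k x Hk => proj2 (Hcube k Hk) x))|].
    pose proof (pow_R1_Rle 3 d ltac:(lra)); pose proof (Rinv_0_lt_compat _ Hn0).
    assert (M * exp (- lam ^ 2) <= M * / INR n) by (apply Rmult_le_compat_l; lra).
    unfold Rdiv; nra.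
Qed.
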